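(* There exist Tychonoff spaces $X$ and $Y$ such that $C_p(X,\mathbb{R})$ and $C_p(Y,\mathbb{R})$ are topologically isomorphic, but $C_p(X,\mathbb{T})$ and $C_p(Y,\mathbb{T})$ are not topologically isomorphic.
   Context: $\mathbb{T}=\mathbb{R}/\mathbb{Z}$. For a topological group $G$, $C_p(X,G)$ is the group of continuous maps $X\to G$ with pointwise group operations and the topology of pointwise convergence; topological isomorphism means isomorphism of topological groups. *)

From HB Require Import structures.
From mathcomp Require Import all_boot all_order all_algebra.
From mathcomp Require Import all_classical all_reals all_analysis.
Set Implicit Arguments. Unset Strict Implicit. Unset Printing Implicit Defensive.
Import Order.TTheory GRing.Theory Num.Theory.
Import numFieldNormedType.Exports.
Local Open Scope classical_set_scope.
Local Open Scope ring_scope.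

Definition tychonoff_space (X : topologicalType) : Prop :=
  completely_regular_space X /\ hausdorff_space X.

(* Underlying set of C_p(X,G): the continuous maps X -> V with values in the
   subset G of V (G is the group, carried by the topological space V),
   viewed inside V^X with the pointwise (product) topology. *)
Definition Cp (X V : topologicalType) (G : set V) : set {ptws X -> V} :=
  [set f | continuous (f : X -> V) /\ forall x, G (f x)].

Definition Cp_top_iso (V : topologicalType) (G : set V) (op : V -> V -> V)
    (X Y : topologicalType) : Prop :=
  exists (Phi : {ptws X -> V} -> {ptws Y -> V})
         (Psi : {ptws Y -> V} -> {ptws X -> V}),
  [/\ (forall f, Cp G f -> Cp G (Phi f)) /\ (forall g, Cp G g -> Cp G (Psi g)),
      (forall f, Cp G f -> Psi (Phi f) = f) /\ (forall g, Cp G g -> Phi (Psi g) = g),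
      (forall f g, Cp G f -> Cp G g ->
          Phi (fun x => op (f x) (g x)) = (fun y => op (Phi f y) (Phi g y))),
      {within Cp G, continuous Phi} &
      {within Cp G, continuous Psi}].

(* The circle group T = R/Z, realized (as a topological group) as the unit
   circle S^1 in R x R with complex multiplication; t + Z |-> (cos 2 pi t,
   sin 2 pi t) is an isomorphism of topological groups R/Z ~ S^1. *)
Definition circle (R : realType) : set (R * R)%type :=
  [set z | z.1 ^+ 2 + z.2 ^+ 2 = 1].

Definition circle_mul (R : realType) (z w : (R * R)%type) : (R * R)%type :=
  (z.1 * w.1 - z.2 * w.2, z.1 * w.2 + z.2 * w.1).

From HB Require Import structures.
From mathcomp Require Import all_boot all_order all_algebra.
From mathcomp Require Import all_classical all_reals all_analysis.
From mathcomp Require Import ring lra zify.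
Import Order.TTheory GRing.Theory Num.Theory.
Import numFieldNormedType.Exports.
Local Open Scope classical_set_scope.
Local Open Scope ring_scope.
Set Implicit Arguments. Unset Strict Implicit.

(* Both spaces are [0, +oo), the second with an isolated point -1 adjoined.
   Since [0, +oo) is connected, the only continuous maps from it to {1, -1},
   i.e. the elements of order at most two of C_p(X, T), are the two
   constants, whereas C_p(Y, T) has four of them; a group isomorphism
   matches these elements, so C_p(X, T) and C_p(Y, T) are not isomorphic.
   For real values the isolated point can be absorbed: subtracting from f the
   piecewise linear interpolation of its values at 0, 1, 2, ... and adding
   the interpolation of the values shifted by one step turns f on X into a
   function on Y whose values at -1, 0, 1, ... are those of f at 0, 1, 2, ...;
   this is a linear homeomorphism for the pointwise topologies. *)

Section piecewise_linear.
Variable R : realType.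
Implicit Types (d : int -> R) (k : int) (x : R).

Definition pl_interp d x : R :=
  d (Num.floor x) + (x - (Num.floor x)%:~R) * (d (Num.floor x + 1) - d (Num.floor x)).

Lemma pl_interp_int d k : pl_interp d k%:~R = d k.
Proof. by rewrite /pl_interp intrKfloor subrr mul0r addr0. Qed.

Lemma pl_interp_segment d k x : k%:~R <= x <= k%:~R + 1 ->
  pl_interp d x = d k + (x - k%:~R) * (d (k + 1) - d k).
Proof.
move=> /andP[kx xk1]; have [->|xNk1] := eqVneq x (k%:~R + 1).
  by rewrite -(intrD _ k 1) pl_interp_int intrD; ring.
have fl_x : Num.floor x = k by apply: floor_def; rewrite kx intrD lt_neqAle xNk1.
by rewrite /pl_interp fl_x.
Qed.

(* Near [x0], the interpolant is a single expression: the affine piece of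
   [[n, n+1]] corrected on [[n-1, n]] by a [min]-term, where [n = floor x0]. *)
Lemma continuous_pl_interp d : continuous (pl_interp d).
Proof.
move=> x0; set n := Num.floor x0.
pose G x := d n + (x - n%:~R) * (d (n + 1) - d n) +
  Num.min (x - n%:~R) 0 * ((d n - d (n - 1)) - (d (n + 1) - d n)).
have n_x0 : n%:~R <= x0 := floor_le x0.
have x0_n1 : x0 < n%:~R + 1 by have := floorD1_gt x0; rewrite intrD.
have n_pred : (n - 1)%:~R = n%:~R - 1 :> R by rewrite intrB.
have near_G : \forall x \near x0, G x = pl_interp d x.
  near=> x.
  have x_gt : n%:~R - 1 < x by near: x; apply: lt_nbhsr; lra.
  have x_lt : x < n%:~R + 1 by near: x; apply: lt_nbhsl.
  rewrite /G; case: (leP n%:~R x) => nx.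
    rewrite (@pl_interp_segment _ n); last by rewrite nx ltW.
    have -> : Num.min (x - n%:~R) 0 = 0 by apply/min_idPr; lra.
    by rewrite mul0r addr0.
  rewrite (@pl_interp_segment _ (n - 1)) n_pred; last by rewrite !ltW // subrK.
  have -> : Num.min (x - n%:~R) 0 = x - n%:~R by apply/min_idPl; lra.
  by rewrite subrK; ring.
apply: cvg_trans; first exact: (near_eq_cvg near_G).
have -> : pl_interp d x0 = G x0.
  rewrite /G (@pl_interp_segment _ n) ?n_x0 ?ltW //.
  have -> : Num.min (x0 - n%:~R) 0 = 0 by apply/min_idPr; lra.
  by rewrite mul0r addr0.
apply: cvgD; [apply: cvgD; [exact: cvg_cst|]|]; apply: cvgMr_tmp.
- by apply: cvgB; [exact: cvg_id|exact: cvg_cst].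
- apply: (@continuous_min R R (fun x => x - n%:~R) (fun _ => 0)); last exact: cvg_cst.
  by apply: cvgB; [exact: cvg_id|exact: cvg_cst].
Unshelve. all: end_near.
Qed.

Lemma pl_interpN d x : pl_interp (fun n => - d n) x = - pl_interp d x.
Proof. by rewrite /pl_interp; ring. Qed.

Lemma eq_pl_interp_ge0 d1 d2 x : (forall n, 0 <= n -> d1 n = d2 n) -> 0 <= x ->
  pl_interp d1 x = pl_interp d2 x.
Proof.
move=> d12 x_ge0; have fl_ge0 : 0 <= Num.floor x by rewrite floor_ge0.
by rewrite /pl_interp !d12 // addr_ge0.
Qed.

Lemma cvg_pl_interp (T : Type) (F : set_system T) {FF : Filter F}
    (D : T -> int -> R) d x :
  (forall n, (fun t => D t n) @ F --> d n) ->
  (fun t => pl_interp (D t) x) @ F --> pl_interp d x.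
Proof.
move=> D_d; apply: cvgD; first exact: D_d.
by apply: cvgMl_tmp; apply: cvgB; exact: D_d.
Qed.

Lemma continuous_pl_interp_val (S : set R) (d : int -> R) :
  continuous (fun x : S => pl_interp d (val x)).
Proof.
by move=> x; apply: continuous_comp; [exact: initial_continuous|exact: continuous_pl_interp].
Qed.

End piecewise_linear.

Lemma tychonoff_set_type (R : realType) (T : pseudoMetricType R) (S : set T) :
  hausdorff_space T -> tychonoff_space S.
Proof.
move=> T_haus; split; first exact: uniform_completely_regular.
move=> p q pq_cl; apply: val_inj; apply: T_haus => U V U_p V_q.
have [w [wU wV]] := pq_cl _ _ (initial_continuous U_p) (initial_continuous V_q).
by exists (val w).
Qed.

Lemma cvg_eval (X V : topologicalType) (f : {ptws X -> V}) (x : X) :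
  (fun g : {ptws X -> V} => g x) @ f --> f x.
Proof. exact: (@proj_continuous _ (fun _ : X => V) x f). Qed.

Section halflines.
Variable R : realType.

Definition halfline : set R := [set x | 0 <= x].
Definition halfline_m1 : set R := [set x | x = -1 \/ 0 <= x].

Lemma to_halfline_subproof (z : R) : Num.max z 0 \in halfline.
Proof. by rewrite inE /halfline /= le_max lexx orbT. Qed.

Definition to_halfline (z : R) : halfline :=
  exist (fun x => x \in halfline) (Num.max z 0) (to_halfline_subproof z).

Lemma to_halfline_m1_subproof (z : R) : (if 0 <= z then z else -1) \in halfline_m1.
Proof. by rewrite inE /halfline_m1 /=; case: ifP => z0; [right|left]. Qed.

Definition to_halfline_m1 (z : R) : halfline_m1 :=
  exist (fun x => x \in halfline_m1) _ (to_halfline_m1_subproof z).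

Lemma val_to_halfline z : 0 <= z -> val (to_halfline z) = z.
Proof. by move=> z0; apply/max_idPl. Qed.

Lemma to_halfline_val (x : halfline) : to_halfline (val x) = x.
Proof. by apply: val_inj; rewrite val_to_halfline //; exact: (set_valP x). Qed.

Lemma val_to_halfline_m1 z : z = -1 \/ 0 <= z -> val (to_halfline_m1 z) = z.
Proof.
by move=> [->|z0] /=; rewrite ?z0 // ifN // -ltNge ltrN10.
Qed.

Lemma to_halfline_m1_val (y : halfline_m1) : to_halfline_m1 (val y) = y.
Proof. by apply: val_inj; rewrite val_to_halfline_m1 //; exact: (set_valP y). Qed.

Lemma val_to_halfline_m1_int (m : int) : -1 <= m ->
  val (to_halfline_m1 m%:~R) = m%:~R.
Proof.
rewrite le_eqVlt => /orP[/eqP <-|m_gt]; apply: val_to_halfline_m1; first by left.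
by right; move: m_gt; rewrite ler0z -lezD1.
Qed.

Lemma continuous_to_halfline : continuous to_halfline.
Proof.
apply: continuous_comp_initial => z.
apply: (@continuous_max R R id (fun _ => 0)); [exact: cvg_id|exact: cvg_cst].
Qed.

Lemma continuous_halfline_incl : continuous (fun x : halfline => to_halfline_m1 (val x)).
Proof.
apply: continuous_comp_initial.
have -> : set_val \o (fun x : halfline => to_halfline_m1 (val x)) = val.
  by apply: funext => x; apply: val_to_halfline_m1; right; exact: (set_valP x).
exact: initial_continuous.
Qed.

Definition shift_up (f : {ptws halfline -> R}) : {ptws halfline_m1 -> R} :=
  fun y => f (to_halfline (val y)) +
    pl_interp (fun n => f (to_halfline (n + 1)%:~R) - f (to_halfline n%:~R)) (val y).

Definition shift_down (g : {ptws halfline_m1 -> R}) : {ptws halfline -> R} :=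
  fun x => g (to_halfline_m1 (val x)) +
    pl_interp (fun n => g (to_halfline_m1 (n - 1)%:~R) - g (to_halfline_m1 n%:~R)) (val x).

Lemma shift_up_int f (m : int) : -1 <= m ->
  shift_up f (to_halfline_m1 m%:~R) = f (to_halfline (m + 1)%:~R).
Proof. by move=> m_ge; rewrite /shift_up val_to_halfline_m1_int // pl_interp_int addrC subrK. Qed.

Lemma shift_down_int g (m : int) : 0 <= m ->
  shift_down g (to_halfline m%:~R) = g (to_halfline_m1 (m - 1)%:~R).
Proof. by move=> m_ge0; rewrite /shift_down val_to_halfline ?ler0z // pl_interp_int addrC subrK. Qed.

Lemma shift_upK : cancel shift_up shift_down.
Proof.
move=> f; apply: funext => x; have x_ge0 : 0 <= val x := set_valP x.
rewrite /shift_down (@eq_pl_interp_ge0 _ _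
  (fun n => - (f (to_halfline (n + 1)%:~R) - f (to_halfline n%:~R)))) //.
  rewrite pl_interpN /shift_up val_to_halfline_m1 ?to_halfline_val; last by right.
  by rewrite addrK.
move=> n n_ge0; rewrite !shift_up_int; [|lia|lia].
by rewrite subrK opprB.
Qed.

Lemma shift_downK : cancel shift_down shift_up.
Proof.
move=> g; apply: funext => y; have [y_m1|y_ge0] := set_valP y.
  have -> : y = to_halfline_m1 (-1)%:~R by rewrite -(to_halfline_m1_val y) y_m1.
  by rewrite shift_up_int // shift_down_int.
rewrite /shift_up (@eq_pl_interp_ge0 _ _
  (fun n => - (g (to_halfline_m1 (n - 1)%:~R) - g (to_halfline_m1 n%:~R)))) //.
  rewrite pl_interpN /shift_down val_to_halfline // to_halfline_m1_val.
  by rewrite addrK.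
move=> n n_ge0; rewrite !shift_down_int; [|lia|lia].
by rewrite addrK opprB.
Qed.

Lemma shift_upD (f g : {ptws halfline -> R}) :
  shift_up (fun x => f x + g x) = (fun y => shift_up f y + shift_up g y).
Proof. by apply: funext => y; rewrite /shift_up /pl_interp; ring. Qed.

Lemma continuous_shift_up (f : halfline -> R) : continuous f -> continuous (shift_up f).
Proof.
move=> f_cont; have f_retract : continuous (fun y : halfline_m1 => f (to_halfline (val y))).
  move=> y; apply: continuous_comp; last exact: f_cont.
  by apply: continuous_comp; [exact: initial_continuous|exact: continuous_to_halfline].
by move=> y; have := cvgD (f_retract y) (@continuous_pl_interp_val R halfline_m1 _ y); exact.
Qed.

Lemma continuous_shift_down (g : halfline_m1 -> R) : continuous g -> continuous (shift_down g).
Proof.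
move=> g_cont; have g_incl : continuous (fun x : halfline => g (to_halfline_m1 (val x))).
  by move=> x; apply: continuous_comp; [exact: continuous_halfline_incl|exact: g_cont].
by move=> x; have := cvgD (g_incl x) (@continuous_pl_interp_val R halfline _ x); exact.
Qed.

Lemma ptws_continuous_shift_up : continuous shift_up.
Proof.
move=> f; have f_filter : Filter (nbhs f) := nbhs_filter f.
apply/pointwise_cvgP => y.
have interp_cvg := cvg_pl_interp (FF := f_filter) (x := val y) (fun n =>
  @cvgB _ _ _ _ f_filter _ _ _ _ (cvg_eval (f := f) (x := to_halfline (n + 1)%:~R))
    (cvg_eval (f := f) (x := to_halfline n%:~R))).
exact: (@cvgD _ _ _ _ f_filter _ _ _ _ (cvg_eval (f := f) (x := _)) interp_cvg).
Qed.

Lemma ptws_continuous_shift_down : continuous shift_down.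
Proof.
move=> g; have g_filter : Filter (nbhs g) := nbhs_filter g.
apply/pointwise_cvgP => x.
have interp_cvg := cvg_pl_interp (FF := g_filter) (x := val x) (fun n =>
  @cvgB _ _ _ _ g_filter _ _ _ _ (cvg_eval (f := g) (x := to_halfline_m1 (n - 1)%:~R))
    (cvg_eval (f := g) (x := to_halfline_m1 n%:~R))).
exact: (@cvgD _ _ _ _ g_filter _ _ _ _ (cvg_eval (f := g) (x := _)) interp_cvg).
Qed.

Lemma Cp_real_iso_halflines : @Cp_top_iso R setT +%R halfline halfline_m1.
Proof.
exists shift_up, shift_down; split.
- by split=> f [f_cont _]; split=> //;
    [exact: continuous_shift_up|exact: continuous_shift_down].
- by split=> f _; [exact: shift_upK|exact: shift_downK].
- by move=> f g _ _; exact: shift_upD.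
- by apply: continuous_subspaceT; exact: ptws_continuous_shift_up.
- by apply: continuous_subspaceT; exact: ptws_continuous_shift_down.
Qed.

End halflines.

Section circle_group.
Variable R : realType.
Implicit Types z w : (R * R)%type.

Lemma circle_mul_closed z w : circle z -> circle w -> circle (circle_mul z w).
Proof.
rewrite /circle /circle_mul /= => z1 w1.
have -> : (z.1 * w.1 - z.2 * w.2) ^+ 2 + (z.1 * w.2 + z.2 * w.1) ^+ 2
   = (z.1 ^+ 2 + z.2 ^+ 2) * (w.1 ^+ 2 + w.2 ^+ 2) by ring.
by rewrite z1 w1 mul1r.
Qed.

Lemma circle_mul_idem z : circle z -> circle_mul z z = z -> z = (1, 0).
Proof.
case: z => a b; rewrite /circle /circle_mul /= !expr2 => z1 [e1 e2].
have /eqP : b * (2 * a - 1) = 0 by nra.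
rewrite mulf_eq0 => /orP[/eqP b0|/eqP a_half]; last by exfalso; nra.
by rewrite b0; congr (_, _); nra.
Qed.

Lemma circle_sqr_eq1 z : circle z -> circle_mul z z = (1, 0) -> z = (1, 0) \/ z = (-1, 0).
Proof.
case: z => a b; rewrite /circle /circle_mul /= !expr2 => z1 [e1 e2].
have /eqP : b * b = 0 by nra.
rewrite mulf_eq0 orbb => /eqP b0.
have /eqP : (a - 1) * (a + 1) = 0 by rewrite b0 in e1; nra.
by rewrite b0 mulf_eq0 => /orP[/eqP a1|/eqP a1]; [left|right]; congr (_, _); lra.
Qed.

Lemma continuous_circle_mul (U : topologicalType) (f g : U -> (R * R)%type) :
  continuous f -> continuous g -> continuous (fun x => circle_mul (f x) (g x)).
Proof.
move=> f_cont g_cont x; have x_filter : Filter (nbhs x) := nbhs_filter x.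
have [f1 f2] : (fun y => (f y).1) @ x --> (f x).1 /\ (fun y => (f y).2) @ x --> (f x).2.
  by split; apply: continuous_comp (f_cont x) _; [exact: cvg_fst|exact: cvg_snd].
have [g1 g2] : (fun y => (g y).1) @ x --> (g x).1 /\ (fun y => (g y).2) @ x --> (g x).2.
  by split; apply: continuous_comp (g_cont x) _; [exact: cvg_fst|exact: cvg_snd].
apply: (@cvg_pair _ _ _ _ _ _ x_filter (nbhs_filter _) (nbhs_filter _)).
- exact: (@cvgB _ _ _ _ x_filter _ _ _ _
    (@cvgM _ _ _ x_filter _ _ _ _ f1 g1) (@cvgM _ _ _ x_filter _ _ _ _ f2 g2)).
- exact: (@cvgD _ _ _ _ x_filter _ _ _ _
    (@cvgM _ _ _ x_filter _ _ _ _ f1 g2) (@cvgM _ _ _ x_filter _ _ _ _ f2 g1)).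
Qed.

Definition Cp_sqr1 (X : topologicalType) (f : {ptws X -> (R * R)%type}) : Prop :=
  Cp (@circle R) f /\ forall x, circle_mul (f x) (f x) = (1, 0).

Lemma circle_pm1 z : z = (1, 0) \/ z = (-1, 0) -> circle z /\ circle_mul z z = (1, 0).
Proof.
by case=> ->; rewrite /circle /circle_mul /=; split; rewrite ?expr2; try congr (_, _); ring.
Qed.

Lemma Cp_sqr1_pm1 (X : topologicalType) (f : {ptws X -> (R * R)%type}) : continuous f ->
  (forall x, f x = (1, 0) \/ f x = (-1, 0)) -> Cp_sqr1 f.
Proof.
by move=> f_cont f_pm; split; [split=> // x|move=> x]; have [] := circle_pm1 (f_pm x).
Qed.

Lemma Cp_sqr1_1 (X : topologicalType) : Cp_sqr1 (fun _ : X => (1, 0)).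
Proof. by apply: Cp_sqr1_pm1 => [|_]; [exact: cst_continuous|left]. Qed.

Lemma Cp_sqr1_N1 (X : topologicalType) : Cp_sqr1 (fun _ : X => (-1, 0)).
Proof. by apply: Cp_sqr1_pm1 => [|_]; [exact: cst_continuous|right]. Qed.

(* A group isomorphism fixes the identity (the only idempotent) and, with its
   inverse, matches the elements of order at most two on both sides. *)
Lemma Cp_iso_sqr1_at_most_two (X Y : topologicalType) :
  Cp_top_iso (@circle R) (@circle_mul R) X Y ->
  (forall f : {ptws X -> (R * R)%type}, Cp_sqr1 f ->
    f = (fun _ => (1, 0)) \/ f = (fun _ => (-1, 0))) ->
  forall g1 g2 g3 : {ptws Y -> (R * R)%type}, Cp_sqr1 g1 -> Cp_sqr1 g2 -> Cp_sqr1 g3 ->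
  [\/ g1 = g2, g1 = g3 | g2 = g3].
Proof.
move=> [Phi [Psi [[Phi_Cp Psi_Cp] [PhiK PsiK] PhiM _ _]]] X_sqr1.
have Phi1 : Phi (fun _ => (1, 0)) = (fun _ => (1, 0)).
  have one_idem : (fun _ : X => circle_mul ((1, 0) : (R * R)%type) (1, 0)) = (fun _ => (1, 0)).
    by apply: funext => _; rewrite /circle_mul /=; congr (_, _); ring.
  have := PhiM _ _ (Cp_sqr1_1 X).1 (Cp_sqr1_1 X).1; rewrite /= one_idem => Phi1_idem.
  apply: funext => y; apply: circle_mul_idem; first exact: (Phi_Cp _ (Cp_sqr1_1 X).1).2.
  exact: (congr1 (fun h => h y) (esym Phi1_idem)).
have two_values g : Cp_sqr1 g -> g = Phi (fun _ => (1, 0)) \/ g = Phi (fun _ => (-1, 0)).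
  move=> [g_Cp g_sqr]; rewrite -(PsiK g g_Cp).
  suff /X_sqr1[->|->] : Cp_sqr1 (Psi g) by [left|right].
  have Psig_Cp := Psi_Cp g g_Cp.
  have Psig2_Cp : Cp (@circle R) (fun x => circle_mul (Psi g x) (Psi g x)).
    split; first exact: continuous_circle_mul Psig_Cp.1 Psig_Cp.1.
    by move=> x; apply: circle_mul_closed; exact: Psig_Cp.2.
  have Psig2 : (fun x => circle_mul (Psi g x) (Psi g x)) = (fun _ => (1, 0)).
    rewrite -(PhiK _ Psig2_Cp) PhiM // (PsiK g g_Cp) -(PhiK _ (Cp_sqr1_1 X).1) Phi1.
    by congr Psi; apply: funext => y; rewrite g_sqr.
  by split=> // x; rewrite (congr1 (fun h => h x) Psig2).
move=> g1 g2 g3 /two_values[]-> /two_values[]-> /two_values[]->;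
  first [exact: Or31 erefl | exact: Or32 erefl | exact: Or33 erefl].
Qed.

End circle_group.

Section halflines_circle.
Variable R : realType.

Lemma halfline_sign_const (f : @halfline R -> R) : continuous f ->
  (forall x, f x = 1 \/ f x = -1) -> forall x, f x = f (to_halfline 0).
Proof.
move=> f_cont f_sign x; have [//|fx_neq] := eqVneq (f x) (f (to_halfline 0)).
pose phi z := f (to_halfline z).
have phi_cont : continuous phi.
  by move=> z; apply: continuous_comp; [exact: continuous_to_halfline|exact: f_cont].
have [c _ phi_c] : exists2 c, c \in `[0, val x] & phi c = 0.
  apply: IVT; [exact: (set_valP x)|exact: continuous_subspaceT|].
  rewrite /phi to_halfline_val.
  case: (f_sign x) (f_sign (to_halfline 0)) fx_neq => -> [] ->; rewrite ?eqxx // => _;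
    by rewrite ge_min le_max lerN10 ler01 ?orbT.
by case: (f_sign (to_halfline c)); rewrite -/(phi c) phi_c; lra.
Qed.

Lemma halfline_sqr1 (f : {ptws @halfline R -> (R * R)%type}) : Cp_sqr1 f ->
  f = (fun _ => (1, 0)) \/ f = (fun _ => (-1, 0)).
Proof.
move=> [[f_cont f_circ] f_sqr].
have f_pm x : f x = (1, 0) \/ f x = (-1, 0) := circle_sqr_eq1 (f_circ x) (f_sqr x).
have fst_const : forall x, (f x).1 = (f (to_halfline 0)).1.
  apply: halfline_sign_const => [x|x]; last by case: (f_pm x) => ->; [left|right].
  by apply: continuous_comp (f_cont x) _; exact: cvg_fst.
have f_const x : f x = f (to_halfline 0).
  move: (fst_const x); case: (f_pm x) => ->; case: (f_pm (to_halfline 0)) => -> //= e;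
    by exfalso; lra.
by case: (f_pm (to_halfline 0)) => e; [left|right]; apply: funext => x; rewrite f_const e.
Qed.

Definition halfline_m1_sign (y : @halfline_m1 R) : (R * R)%type :=
  (Num.min 1 (2 * val y + 1), 0).

Lemma halfline_m1_sign_ge0 (y : @halfline_m1 R) : 0 <= val y -> halfline_m1_sign y = (1, 0).
Proof. by move=> y_ge0; congr (_, _); apply/min_idPl; lra. Qed.

Lemma halfline_m1_sign_m1 (y : @halfline_m1 R) : val y = -1 -> halfline_m1_sign y = (-1, 0).
Proof.
move=> y_m1; rewrite /halfline_m1_sign y_m1; congr (_, _).
have -> : 2 * -1 + 1 = -1 :> R by ring.
by apply/min_idPr; lra.
Qed.

Lemma Cp_sqr1_halfline_m1_sign : Cp_sqr1 halfline_m1_sign.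
Proof.
apply: Cp_sqr1_pm1; last first.
  move=> y; case: (set_valP y) => y_val.
    by right; exact: halfline_m1_sign_m1.
  by left; exact: halfline_m1_sign_ge0.
have clamp_cont : continuous (fun y : @halfline_m1 R => Num.min 1 (2 * val y + 1)).
  move=> y; apply: (continuous_comp (g := fun z : R => Num.min 1 (2 * z + 1)));
    first exact: initial_continuous.
  apply: (@continuous_min R R (fun _ => 1) (fun z => 2 * z + 1)); first exact: cvg_cst.
  by apply: cvgD; [apply: cvgMl_tmp; exact: cvg_id|exact: cvg_cst].
move=> y; have y_filter : Filter (nbhs y) := nbhs_filter y.
apply: (@cvg_pair _ _ _ _ _ _ y_filter (nbhs_filter _) (nbhs_filter _)); last exact: cvg_cst.
exact: clamp_cont.
Qed.

Lemma not_Cp_circle_iso_halflines :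
  ~ Cp_top_iso (@circle R) (@circle_mul R) (@halfline R) (@halfline_m1 R).
Proof.
move=> /Cp_iso_sqr1_at_most_two /(_ halfline_sqr1) at_most_two.
have one_neq : ((1, 0) : (R * R)%type) <> (-1, 0) by case; lra.
pose y_m1 := @to_halfline_m1 R (-1); pose y0 := @to_halfline_m1 R 0.
have sign_m1 : halfline_m1_sign y_m1 = (-1, 0).
  by apply: halfline_m1_sign_m1; apply: val_to_halfline_m1; left.
have sign0 : halfline_m1_sign y0 = (1, 0).
  by apply: halfline_m1_sign_ge0; rewrite val_to_halfline_m1 //; right.
case: (at_most_two _ _ _ (Cp_sqr1_1 R _) (Cp_sqr1_N1 R _) Cp_sqr1_halfline_m1_sign).
- by move=> /(congr1 (fun h => h y0)).
- by move=> /(congr1 (fun h => h y_m1)) /=; rewrite sign_m1.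
- by move=> /(congr1 (fun h => h y0)) /=; rewrite sign0 => /esym.
Qed.

End halflines_circle.

Theorem proposition10p11 (R : realType) :
  exists X Y : topologicalType,
    [/\ tychonoff_space X, tychonoff_space Y,
        @Cp_top_iso R setT +%R X Y &
        ~ @Cp_top_iso (R * R)%type (@circle R) (@circle_mul R) X Y].
Proof.
exists (set_type (@halfline R)), (set_type (@halfline_m1 R)); split.
- exact/tychonoff_set_type/Rhausdorff.
- exact/tychonoff_set_type/Rhausdorff.
- exact: Cp_real_iso_halflines.
- exact: not_Cp_circle_iso_halflines.
Qed.
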